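(* For every natural number $n\ge 1$, $p_{min}(n+1)=p_{min}(n)\pm 1$. Moreover, for every integer $k\ge 1$, $p_{min}(n)-1\le p_{min}(n+k)\le p_{min}(n)+k$, and if $p_{min}(n+1)=p_{min}(n)+1$, then $p_{min}(n)\le p_{min}(n+k)$.
   Context: A polyiamond is a planar shape formed by gluing together finitely many congruent (closed) equilateral triangles (tiles) of the regular triangular lattice along their edges: any two tiles that intersect meet in an entire edge, and the union has connected interior. The perimeter $p(A)$ of a polyiamond $A$ is the number of lattice edges lying on the topological boundary of $A$. For $n\ge1$, $p_{min}(n)$ is the minimum of $p(A)$ over all polyiamonds $A$ with exactly $n$ tiles. *)

From mathcomp Require Import all_boot all_order all_algebra.
From mathcomp Require Import boolp.
Set Implicit Arguments. Unset Strict Implicit. Unset Printing Implicit Defensive.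
Import GRing.Theory Num.Theory.

(* In lattice coordinates (basis
   vectors e1, e2 at 60 degrees), the tile (x, y, false) is the "up" triangle
   with vertices (x,y), (x+1,y), (x,y+1); the tile (x, y, true) is the "down"
   triangle with vertices (x+1,y), (x,y+1), (x+1,y+1).  Every lattice triangle
   is exactly one such tile. *)
Definition tile := (int * int * bool)%type.

(* The three tiles sharing an entire edge with a given tile. *)
Definition nbrs (t : tile) : seq tile :=
  let: (x, y, b) := t in
  if b then [:: (x, y, false); (x + 1, y, false); (x, y + 1, false)]%R
  else [:: (x, y, true); (x - 1, y, true); (x, y - 1, true)]%R.

Definition adj : rel tile := fun t u => u \in nbrs t.

(* A polyiamond: a nonempty finite set of tiles (duplicate-free list) whose
   union has connected interior, i.e. the edge-adjacency graph on the tiles is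
   connected. *)
Definition polyiamond (A : seq tile) : Prop :=
  [/\ uniq A, A != [::] &
      forall a b, a \in A -> b \in A ->
        exists s : seq tile, [/\ path adj a s, last a s = b & all (mem A) s]].

(* Perimeter: number of lattice edges on the boundary of the union = number of
   edges having exactly one adjacent tile in A = number of pairs (t, u) with
   t in A, u an edge-neighbour of t not in A. *)
Definition perimeter (A : seq tile) : nat :=
  sumn [seq count (fun u => u \notin A) (nbrs t) | t <- A].

Definition attained (n p : nat) : Prop :=
  exists A, polyiamond A /\ size A = n /\ perimeter A = p.

(* p_min(n): least perimeter of a polyiamond with n tiles (0 if none exist,
   which only happens for n = 0). *)
Definition pmin (n : nat) : nat :=
  match pselect (exists p, (fun q => `[< attained n q >]) p) with
  | left h => ex_minn h
  | right _ => 0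
  end.

From mathcomp Require Import all_boot all_order all_algebra.
From mathcomp Require Import boolp.
From mathcomp Require Import zify.
Set Implicit Arguments. Unset Strict Implicit. Unset Printing Implicit Defensive.

(* Adding to A a tile with d neighbours in A changes the perimeter by 3 - 2d, so
   perimeter and size have the same parity and p_min(n+1) <> p_min(n).  The tile
   just above the highest tile of A has a neighbour in A, which gives
   p_min(n+1) <= p_min(n) + 1.  Conversely, every polyiamond with at least two
   tiles has a non-cut tile v that is light: v has at most one neighbour, or two
   neighbours one of which, a, has at most two.  Such a tile is an extreme tile
   (in the order "by rows, then by columns") of a minimal piece hanging from a
   single tile of A.  Removing v costs at most 1, so p_min(n) <= p_min(n+1) + 1;
   removing v and then a (or, if v has at most one neighbour, another light
   non-cut tile) costs nothing, so p_min(n) <= p_min(n+2).  The statement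
   follows from these three inequalities and the parity. *)

Lemma nbrs_uniq (t : tile) : uniq (nbrs t).
Proof. case: t => [[x y] []]; rewrite /= !inE !xpair_eqE /=; lia. Qed.

Lemma nbrs_irr (t : tile) : t \notin nbrs t.
Proof. case: t => [[x y] []]; rewrite /= !inE !xpair_eqE /=; lia. Qed.

Lemma nbrs_sym (t u : tile) : (u \in nbrs t) = (t \in nbrs u).
Proof.
case: t => [[x y] []]; case: u => [[x' y'] []];
  rewrite /= !inE !xpair_eqE /=; apply/idP/idP; lia.
Qed.

Lemma size_nbrs (t : tile) : size (nbrs t) = 3.
Proof. by case: t => [[x y] []]. Qed.

Definition deg (A : seq tile) (t : tile) : nat := count [in A] (nbrs t).

Lemma perimeterE (A : seq tile) :
  perimeter A = \sum_(t <- A) count (fun u => u \notin A) (nbrs t).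
Proof. by rewrite /perimeter sumnE big_map. Qed.

Lemma count_notin_nbrs (A : seq tile) (t : tile) :
  count (fun u => u \notin A) (nbrs t) + deg A t = 3.
Proof. by rewrite addnC count_predC size_nbrs. Qed.

Lemma deg_sym (A : seq tile) (t : tile) : uniq A -> deg A t = count [in nbrs t] A.
Proof.
move=> uA; rewrite /deg -!size_filter; apply: perm_size; apply: uniq_perm.
- exact/filter_uniq/nbrs_uniq.
- exact/filter_uniq.
by move=> u; rewrite !mem_filter andbC.
Qed.

Lemma count_notin_cons (A : seq tile) (t : tile) s : t \notin A ->
  count (fun u => u \notin t :: A) s + count_mem t s = count (fun u => u \notin A) s.
Proof.
move=> tA; elim: s => //= u s <-; rewrite inE eq_sym.
by case: eqP => [<-|_]; rewrite ?(negbTE tA) /= ?add0n; [rewrite addnCA | rewrite addnA].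
Qed.

Lemma perimeter_cons (A : seq tile) (t : tile) : uniq A -> t \notin A ->
  perimeter (t :: A) + 2 * deg A t = perimeter A + 3.
Proof.
move=> uA tA; rewrite !perimeterE big_cons.
have := count_notin_cons (nbrs t) tA.
rewrite (count_uniq_mem _ (nbrs_uniq t)) (negbTE (nbrs_irr t)) addn0 => ->.
have hsum : (\sum_(t' <- A) count (fun u => u \notin t :: A) (nbrs t')) + deg A t =
            \sum_(t' <- A) count (fun u => u \notin A) (nbrs t').
  rewrite deg_sym // -sumn_count sumnE big_map -big_split /=.
  apply: eq_bigr => t' _; rewrite -(count_notin_cons _ tA).
  by rewrite (count_uniq_mem _ (nbrs_uniq t')) -nbrs_sym; case: (_ \in _).
have := count_notin_nbrs A t; lia.
Qed.

Lemma perimeter_perm (A B : seq tile) : perm_eq A B -> perimeter A = perimeter B.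
Proof.
move=> pAB; rewrite !perimeterE (perm_big _ pAB) /=.
by apply: eq_bigr => t _; apply: eq_count => u; rewrite (perm_mem pAB).
Qed.

Lemma perimeter_rem (A : seq tile) (v : tile) : uniq A -> v \in A ->
  perimeter (rem v A) + 3 = perimeter A + 2 * deg A v.
Proof.
move=> uA vA; rewrite (perimeter_perm (perm_to_rem vA)).
rewrite -(perimeter_cons (rem_uniq v uA) (negbT (mem_rem_uniqF v uA))).
congr (_ + 2 * _); apply: eq_in_count => u uv /=.
rewrite (mem_rem_uniq _ uA) inE; case: eqP => // uv'.
by move: uv; rewrite uv' (negbTE (nbrs_irr v)).
Qed.

Lemma odd_perimeter (A : seq tile) : uniq A -> odd (perimeter A) = odd (size A).
Proof.
elim: A => // t A IH /andP [tA uA].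
move: (perimeter_cons uA tA); move: (perimeter (t :: A)) => p /(congr1 odd).
by rewrite mul2n !oddD odd_double IH //= addbF => ->; rewrite addbT.
Qed.

Inductive walk (P : pred tile) : tile -> tile -> Prop :=
| walk0 a : P a -> walk P a a
| walkS a b c : P a -> b \in nbrs a -> walk P b c -> walk P a c.

Definition connected (P : pred tile) := forall a b, P a -> P b -> walk P a b.

Lemma walk_ends P a b : walk P a b -> P a /\ P b.
Proof. by elim=> // a' b' c Pa _ _ [_ Pc]. Qed.

Lemma walk_trans P a b c : walk P a b -> walk P b c -> walk P a c.
Proof. by elim=> // a' b' c' Pa ab _ IH /IH; apply: walkS. Qed.

Lemma walk_rcons P a b c : walk P a b -> c \in nbrs b -> P c -> walk P a c.
Proof.
move=> wab bc Pc; have [_ Pb] := walk_ends wab.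
exact: walk_trans wab (walkS Pb bc (walk0 Pc)).
Qed.

Lemma walk_sym P a b : walk P a b -> walk P b a.
Proof.
elim=> [a' Pa|a' b' c Pa ab _ IH]; first exact: walk0.
by apply: walk_rcons IH _ Pa; rewrite -nbrs_sym.
Qed.

Lemma walk_sub (P Q : pred tile) a b : {subset P <= Q} -> walk P a b -> walk Q a b.
Proof.
move=> PQ; elim=> [a' /PQ|a' b' c /PQ Qa ab _ IH]; first exact: walk0.
exact: walkS ab IH.
Qed.

Lemma polyiamondE (A : seq tile) :
  polyiamond A <-> [/\ uniq A, A != [::] & connected [in A]].
Proof.
split=> -[uA nA cA]; split=> // a b aA bA.
- have [s [ps <- sA]] := cA a b aA bA.
  elim: s a aA ps sA {cA bA} => [|c s IH] a aA /=; first by move=> _ _; apply: walk0.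
  by case/andP=> ac ps /andP [cA sA]; apply: walkS ac (IH c cA ps sA).
- elim: (cA a b aA bA) => [a' _|a' b' c _ ab wbc [s [ps <- sA]]]; first by exists [::].
  by exists (b' :: s); rewrite /= ps sA (walk_ends wbc).1 /adj ab.
Qed.

Lemma connected_leaf (P : pred tile) v p : connected P ->
  (forall q, P q -> q \in nbrs v -> q = p) -> connected (predD1 P v).
Proof.
move=> cP leaf a b /andP [av Pa] /andP [bv Pb].
suff : walk (predD1 P v) (if a == v then p else a) b by rewrite (negbTE av).
elim: (cP a b Pa Pb) bv => {a b av Pa Pb} [a Pa|a a1 c Pa aa1 wa1c IH] cv.
  by rewrite (negbTE cv); apply: walk0; rewrite /= cv.
have {IH} := IH cv; have [Pa1 _] := walk_ends wa1c.
case: (eqVneq a v) => [av|av].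
  have a1v : a1 != v by apply: contraNneq (nbrs_irr a) => a1v; rewrite {1}av -a1v.
  by rewrite (negbTE a1v) (leaf a1) // -av.
case: (eqVneq a1 v) => [a1v|a1v wa1c'].
  by rewrite (leaf a) // -nbrs_sym -a1v.
by apply: walkS aa1 wa1c'; rewrite /= av.
Qed.

Lemma deg_le1_nbr (A : seq tile) v : deg A v <= 1 ->
  exists p, forall q, q \in A -> q \in nbrs v -> q = p.
Proof.
rewrite /deg -size_filter.
have mem_f q : q \in A -> q \in nbrs v -> q \in filter [in A] (nbrs v).
  by move=> qA qv; rewrite mem_filter qv andbT.
case: (filter _ _) mem_f => [|p [|//]] mem_f _.
- by exists v => q qA qv; have := mem_f q qA qv.
- by exists p => q qA qv; apply/eqP; rewrite -mem_seq1 mem_f.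
Qed.

Lemma sub_count_lt (T : eqType) (K C : pred T) (s : seq T) u :
  subpred K C -> C u -> ~~ K u -> u \in s -> count K s < count C s.
Proof.
move=> KC Cu Ku; elim: s => // x s IH; rewrite inE /=.
have := sub_count KC s; case: eqP => [<- le_KC _|_ le_KC /IH lt_KC].
  by rewrite Cu (negbTE Ku) /=; lia.
by case Kx: (K x); [rewrite (KC x Kx) | case: (C x)]; lia.
Qed.

Definition noncut (A : seq tile) (v : tile) := connected (predD1 [in A] v).

(* C hangs from the single tile w, as a leaf block of the block-cut tree hangs
   from its cut vertex; minimal such pieces consist of non-cut tiles. *)
Definition pendant (A : seq tile) (w : tile) (C : pred tile) :=
  [/\ w \in A, ~~ C w, exists c, C c, {subset C <= A} &
      forall c a, C c -> a \in nbrs c -> a \in A -> C a || (a == w)].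

Lemma pendant_walk_avoid (A : seq tile) (w : tile) (C : pred tile) (z : tile) :
  pendant A w C -> walk [in A] z w -> ~~ C z -> walk (predI [in A] (predC C)) z w.
Proof.
move=> [_ _ _ _ closed]; move ew: w => c wzc.
elim: wzc ew => [a aA _|a b c' aA ab _ IH cw] Ca; first by apply: walk0; rewrite /= aA.
case Cb: (C b); last by apply: walkS ab (IH cw (negbT Cb)); rewrite /= aA.
have := closed b a Cb; rewrite -nbrs_sym (negbTE Ca) => /(_ ab aA) /eqP aw.
by rewrite -cw -aw; apply: walk0; rewrite /= aA Ca.
Qed.

Lemma pendant_noncut (A : seq tile) (w : tile) (C : pred tile) :
  connected [in A] -> pendant A w C ->
  exists w' (C' : pred tile), pendant A w' C' /\ forall u, C' u -> noncut A u.
Proof.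
move=> cA; move: {2}(count C A) (leqnn (count C A)) => k.
elim: k w C => [|k IH] w C leCk pC; have [wA _ [c Cc] CA _] := pC.
  suff : 0 < count C A by lia.
  by rewrite -has_count; apply/hasP; exists c; first exact: CA.
case: (pselect (forall u, C u -> noncut A u)) => [noncutC|]; first by exists w, C.
move=> /existsNP [u /not_implyP [Cu]] /existsNP [a /existsNP [b]].
move=> /not_implyP [P'a /not_implyP [P'b nab]].
set P' := predD1 [in A] u in P'a P'b nab.
pose K z := `[< P' z /\ ~ walk P' w z >].
have uA := CA u Cu.
have KC : subpred K C.
  move=> z /asboolP [/andP [_ zA] nwz]; apply: contrapT => /negP Cz; apply: nwz.
  apply/walk_sym/(walk_sub _ (pendant_walk_avoid pC (cA z w zA wA) Cz)).
  move=> t /andP [tA /negP Ct]; rewrite /P' !inE /= tA andbT.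
  by apply/eqP => tu; apply: Ct; rewrite tu.
have Ku : ~~ K u by apply/asboolP; rewrite /P' /= eqxx => -[].
have pK : pendant A u K.
  split=> //.
  - case: (pselect (walk P' w a)) => wa; last by exists a; apply/asboolP.
    case: (pselect (walk P' w b)) => wb; last by exists b; apply/asboolP.
    by case: nab; apply: walk_trans (walk_sym wa) wb.
  - by move=> z /asboolP [/andP []].
  move=> c' a' /asboolP [P'c nwc] c'a' a'A; case: (eqVneq a' u) => [_|a'u].
    by rewrite orbT.
  rewrite orbF; apply/asboolP; split; first by rewrite /= a'u.
  by move=> wa'; apply: nwc; apply: walk_rcons wa' _ P'c; rewrite -nbrs_sym.
by apply: (IH u K) pK; apply: leq_trans (sub_count_lt KC Cu Ku uA) leCk.
Qed.

Lemma seq_max (T : eqType) (r : rel T) (s : seq T) :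
  total r -> transitive r -> s != [::] -> exists2 m, m \in s & forall t, t \in s -> r t m.
Proof.
move=> tot tr; elim: s => // x [|y s] IH _.
  by exists x => [|t /[1!inE] /eqP ->]; rewrite ?inE //; case/orP: (tot x x).
have [m ms mmax] := IH isT; case rxm: (r x m).
  exists m => [|t /[1!inE] /orP [/eqP -> //|]]; first by rewrite inE ms orbT.
  exact: mmax.
have rmx : r m x by move: (tot x m); rewrite rxm.
exists x => [|t /[1!inE] /orP [/eqP ->|/mmax rtm]]; first by rewrite inE eqxx.
  by case/orP: (tot x x).
exact: tr rtm rmx.
Qed.

Definition tile_le (t u : tile) : bool :=
  let: (x, y, b) := t in let: (x', y', b') := u in
  ((y < y') || (y == y') && ((x < x') || (x == x') && (b ==> b')))%R.

Lemma tile_le_total : total tile_le.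
Proof.
by move=> [[x y] b] [[x' y'] b']; rewrite /tile_le; case: b; case: b' => /=; lia.
Qed.

Lemma tile_le_trans : transitive tile_le.
Proof.
move=> [[x y] b] [[x' y'] b'] [[x'' y''] b''].
by rewrite /tile_le; case: b; case: b'; case: b'' => /=; lia.
Qed.

Lemma tile_le_anti t u : tile_le t u -> tile_le u t -> t = u.
Proof.
case: t u => [[x y] b] [[x' y'] b'] /=; rewrite /tile_le => tu ut.
have [-> ->] : x = x' /\ y = y' by lia.
by case: b b' tu ut => [] [] //=; lia.
Qed.

(* The point reflection of the lattice reverses tile_le and preserves adjacency;
   it turns statements about the largest tile into statements about the smallest. *)
Definition flip (t : tile) : tile := let: (x, y, b) := t in (- x - 1, - y - 1, ~~ b)%R.

Lemma flipK : involutive flip.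
Proof. by move=> [[x y] b] /=; rewrite negbK; congr (_, _, _); lia. Qed.

Lemma nbrs_flip t : nbrs (flip t) = map flip (nbrs t).
Proof. by case: t => [[x y] []] /=; congr [:: _; _; _]; congr (_, _, _); lia. Qed.

Lemma mem_map_flip (A : seq tile) t : (flip t \in map flip A) = (t \in A).
Proof. exact/mem_map/inv_inj/flipK. Qed.

Lemma tile_le_flip t u : tile_le (flip t) (flip u) = tile_le u t.
Proof.
case: t u => [[x y] b] [[x' y'] b'] /=; rewrite /tile_le.
by case: b; case: b' => /=; apply/idP/idP; lia.
Qed.

Lemma mem_nbrs_flip t u : (flip u \in nbrs (flip t)) = (u \in nbrs t).
Proof. by rewrite nbrs_flip mem_map_flip. Qed.

Lemma deg_flip (A : seq tile) t : deg (map flip A) (flip t) = deg A t.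
Proof.
by rewrite /deg nbrs_flip count_map; apply: eq_count => u; rewrite /= mem_map_flip.
Qed.

(* Removing a light tile v costs at most one; in the second case a is then a
   leaf of A minus v, whose removal gains one back. *)
Definition light (A : seq tile) (v : tile) :=
  deg A v <= 1 \/ deg A v = 2 /\ exists a, [/\ a \in A, a \in nbrs v & deg A a <= 2].

Lemma light_flip (A : seq tile) v : light (map flip A) (flip v) -> light A v.
Proof.
rewrite /light deg_flip => -[|[d2 [a [aA av da]]]]; [by left | right; split=> //].
exists (flip a); rewrite -mem_map_flip -mem_nbrs_flip -deg_flip flipK.
by split.
Qed.

Lemma pendant_flip (A : seq tile) w (C : pred tile) :
  pendant A w C -> pendant (map flip A) (flip w) (C \o flip).
Proof.
move=> [wA Cw [c Cc] CA closed]; split=> [||||c' a' /= Cc' ca' a'A].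
- by rewrite mem_map_flip.
- by rewrite /= flipK.
- by exists (flip c); rewrite /= flipK.
- by move=> t /CA; rewrite -mem_map_flip flipK.
rewrite -mem_nbrs_flip in ca'; rewrite -[a']flipK mem_map_flip in a'A.
by rewrite -[a' == _](inj_eq (inv_inj flipK)) flipK (closed (flip c')).
Qed.

(* In the second alternative m is an up tile, w its left neighbour and b its
   lower neighbour. *)
Lemma pendant_max_light (A : seq tile) w (C : pred tile) m :
  pendant A w C -> C m -> (forall t, t \in A -> C t || (t == w) -> tile_le t m) ->
  (exists2 v, C v & light A v) \/ w.2 /\ exists2 b, C b & ~~ tile_le w b.
Proof.
move=> [_ _ _ _ closed] Cm mmax.
have out c n : C c -> n \in nbrs c -> ~~ tile_le n m -> (n \in A) = false.
  by move=> Cc cn; apply: contraNF => nA; apply: mmax nA (closed c n Cc cn nA).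
case: m Cm mmax out => [[x y] []] Cm mmax out.
  have [o1 o2] : ((x + 1, y, false)%R \in A) = false /\ ((x, y + 1, false)%R \in A) = false.
    by split; apply: (out _ _ Cm); rewrite ?inE ?eqxx ?orbT // /tile_le; lia.
  by left; exists (x, y, true) => //; left; rewrite /deg /= o1 o2; case: (_ \in A).
have mA : ((x, y, true) \in A) = false.
  by apply: (out _ _ Cm); rewrite ?inE ?eqxx // /tile_le; lia.
case aA: ((x - 1, y, true)%R \in A); last first.
  by left; exists (x, y, false) => //; left; rewrite /deg /= mA aA; case: (_ \in A).
case bA: ((x, y - 1, true)%R \in A); last first.
  by left; exists (x, y, false) => //; left; rewrite /deg /= mA aA bA.
have ma : (x - 1, y, true)%R \in nbrs (x, y, false) by rewrite !inE eqxx orbT.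
have mb : (x, y - 1, true)%R \in nbrs (x, y, false) by rewrite !inE eqxx !orbT.
case/orP: (closed _ _ Cm ma aA) => [Ca|/eqP aw].
  left; exists (x, y, false) => //; right; split; first by rewrite /deg /= mA aA bA.
  exists (x - 1, y, true)%R; split=> //.
  have o : ((x - 1, y + 1, false)%R \in A) = false.
    by apply: (out _ _ Ca); rewrite ?inE ?eqxx ?orbT // /tile_le; lia.
  by rewrite /deg /= o; case: (_ \in A); case: (_ \in A).
right; rewrite -aw; split=> //; exists (x, y - 1, true)%R; last by rewrite /tile_le; lia.
by have := closed _ _ Cm mb bA; rewrite -aw => /orP [//|]; rewrite !xpair_eqE; lia.
Qed.

Lemma flip_down t : (flip t).2 = ~~ t.2.
Proof. by case: t => [[x y] b]. Qed.

Lemma pendant_min_light (A : seq tile) w (C : pred tile) m :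
  pendant A w C -> C m -> (forall t, t \in A -> C t || (t == w) -> tile_le m t) ->
  (exists2 v, C v & light A v) \/ ~~ w.2 /\ exists2 b, C b & ~~ tile_le b w.
Proof.
move=> pC Cm mmin.
have Cm' : (C \o flip) (flip m) by rewrite /= flipK.
have mmax t : t \in map flip A -> (C \o flip) t || (t == flip w) -> tile_le t (flip m).
  rewrite -[t]flipK mem_map_flip tile_le_flip /= flipK (inj_eq (inv_inj flipK)).
  exact: mmin.
case: (pendant_max_light (pendant_flip pC) Cm' mmax) => [[v Cv lv]|[wd [b Cb wb]]].
  by left; exists (flip v) => //; apply: light_flip; rewrite flipK.
by right; rewrite -flip_down; split=> //; exists (flip b); rewrite // -tile_le_flip flipK.
Qed.

Lemma pendant_light (A : seq tile) w (C : pred tile) :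
  pendant A w C -> exists2 v, C v & light A v.
Proof.
move=> pC; have [wA Cw [c Cc] CA _] := pC.
pose S t := C t || (t == w).
have SA : filter S A != [::].
  by rewrite -has_filter; apply/hasP; exists w; rewrite // /S eqxx orbT.
have [m /[!mem_filter] /andP [Sm _] mmax] := seq_max tile_le_total tile_le_trans SA.
have [m' /[!mem_filter] /andP [Sm' _] mmin] := seq_max (r := fun t u => tile_le u t)
  (fun t u => tile_le_total u t) (fun _ _ _ h1 h2 => tile_le_trans h2 h1) SA.
have {}mmax t : t \in A -> S t -> tile_le t m.
  by move=> tA St; apply: mmax; rewrite mem_filter St.
have {}mmin t : t \in A -> S t -> tile_le m' t.
  by move=> tA St; apply: mmin; rewrite mem_filter St.
case Cm: (C m); case Cm': (C m'); rewrite /S ?Cm ?Cm' /= in Sm Sm'.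
- have [//|[wd _]] := pendant_max_light pC Cm mmax.
  by have [//|[/negP]] := pendant_min_light pC Cm' mmin.
- have [//|[_ [b Cb]]] := pendant_max_light pC Cm mmax.
  by rewrite -(eqP Sm') mmin // ?CA // /S Cb.
- have [//|[_ [b Cb]]] := pendant_min_light pC Cm' mmin.
  by rewrite -(eqP Sm) mmax // ?CA // /S Cb.
have Sc : S c by rewrite /S Cc.
move: (mmax c (CA c Cc) Sc) (mmin c (CA c Cc) Sc).
by rewrite (eqP Sm) (eqP Sm') => /tile_le_anti cw /cw ew; move: Cw; rewrite -ew Cc.
Qed.

Lemma exists_noncut_light (B : seq tile) : polyiamond B -> 1 < size B ->
  exists v, [/\ v \in B, noncut B v & light B v].
Proof.
move=> /polyiamondE [uB _ cB]; case: B uB cB => [|w [|c B]] // uB cB _.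
have pC : pendant [:: w, c & B] w (predD1 [in [:: w, c & B]] w).
  split=> [||||c' a _ _ aB].
  - exact: mem_head.
  - by rewrite /= eqxx.
  - exists c; rewrite /= !inE eqxx orbT andbT.
    by move: uB => /= /andP [/norP [+ _] _]; rewrite eq_sym.
  - by move=> t /andP [].
  by rewrite /= aB andbT orNb.
have [w' [C' [pC' noncutC']]] := pendant_noncut cB pC.
have [_ _ _ CA _] := pC'; have [v Cv lv] := pendant_light pC'.
by exists v; split; [apply: CA | apply: noncutC' |].
Qed.

Lemma polyiamond_rem (B : seq tile) v : polyiamond B -> v \in B -> noncut B v ->
  1 < size B -> polyiamond (rem v B).
Proof.
move=> /polyiamondE [uB _ _] vB ncv sB; apply/polyiamondE; split.
- exact: rem_uniq.
- by rewrite -size_eq0 size_rem //; case: (size B) sB => // [[]].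
move=> a b; rewrite !(mem_rem_uniq _ uB) => aB bB.
by apply: walk_sub (ncv a b aB bB) => t; rewrite (mem_rem_uniq _ uB).
Qed.

Lemma polyiamond_shrink1 (B : seq tile) : polyiamond B -> 1 < size B ->
  exists B', [/\ polyiamond B', size B' = (size B).-1 & perimeter B' <= perimeter B + 1].
Proof.
move=> pB sB; have [v [vB ncv lv]] := exists_noncut_light pB sB.
have [uB _ _] := pB.
exists (rem v B); split; [exact: polyiamond_rem | exact: size_rem |].
by have := perimeter_rem uB vB; case: lv => [|[-> _]]; lia.
Qed.

Lemma polyiamond_shrink2 (B : seq tile) : polyiamond B -> 2 < size B ->
  exists B', [/\ polyiamond B', size B' = (size B).-2 & perimeter B' <= perimeter B].
Proof.
move=> pB sB; have [v [vB ncv lv]] := exists_noncut_light pB (ltnW sB).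
have [uB _ _] := pB; have pB1 := polyiamond_rem pB vB ncv (ltnW sB).
have sB1 : 1 < size (rem v B) by rewrite size_rem // -subn1 ltn_subRL.
have e1 := perimeter_rem uB vB.
case: lv => [dv|[dv [a [aB av da]]]].
  have [B2 [pB2 sB2 e2]] := polyiamond_shrink1 pB1 sB1.
  by exists B2; split=> //; [rewrite sB2 size_rem | lia].
set B1 := rem v B in pB1 sB1 e1; have uB1 : uniq B1 := rem_uniq v uB.
have aB1 : a \in B1.
  by rewrite mem_rem_uniq // inE aB andbT; apply: contraTneq av => ->; apply: nbrs_irr.
have da1 : deg B1 a <= 1.
  suff : deg B1 a < deg B a by lia.
  apply: (sub_count_lt (u := v)) => [u|//||]; last by rewrite -nbrs_sym.
    by rewrite /= mem_rem_uniq // => /andP [].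
  by rewrite /= mem_rem_uniqF.
have [p leaf] := deg_le1_nbr da1.
have [_ _ cB1] := (polyiamondE B1).1 pB1.
exists (rem a B1); split.
- exact: polyiamond_rem (connected_leaf cB1 leaf) sB1.
- by rewrite size_rem // size_rem.
by have := perimeter_rem uB1 aB1; lia.
Qed.

Definition above (t : tile) : tile :=
  let: (x, y, b) := t in if b then (x, y + 1, false)%R else (x, y, true).

Lemma above_nbrs t : t \in nbrs (above t).
Proof. by case: t => [[x y] []]; rewrite /= !inE !xpair_eqE /=; lia. Qed.

Lemma above_gt t : ~~ tile_le (above t) t.
Proof. by case: t => [[x y] []]; rewrite /tile_le /=; lia. Qed.

Lemma polyiamond_grow (A : seq tile) : polyiamond A ->
  exists A', [/\ polyiamond A', size A' = (size A).+1 & perimeter A' <= perimeter A + 1].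
Proof.
move=> /polyiamondE [uA nA cA].
have [m mA mmax] := seq_max tile_le_total tile_le_trans nA.
have tA : above m \notin A by apply: contra (above_gt m) => /mmax.
have dt : 0 < deg A (above m).
  by rewrite -has_count; apply/hasP; exists m => //; apply: above_nbrs.
exists (above m :: A); split=> //; last by have := perimeter_cons uA tA; lia.
apply/polyiamondE; split; rewrite /= ?tA //.
have to_m a : a \in above m :: A -> walk [in above m :: A] a m.
  have sub : {subset A <= above m :: A} by move=> u uA'; rewrite inE uA' orbT.
  rewrite inE => /orP [/eqP ->|aA]; last exact: walk_sub sub (cA a m aA mA).
  exact: walkS (mem_head _ _) (above_nbrs m) (walk0 (sub m mA)).
by move=> a b /to_m am /to_m /walk_sym; apply: walk_trans.
Qed.

Lemma exists_polyiamond n : 0 < n -> exists A, polyiamond A /\ size A = n.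
Proof.
elim: n => // -[_ _|n IH _].
  exists [:: (0, 0, false)%R]; split=> //; apply/polyiamondE; split=> // a b.
  by rewrite !inE => /eqP -> /eqP ->; apply: walk0; rewrite inE.
have [A [pA <-]] := IH isT; have [A' [pA' <- _]] := polyiamond_grow pA.
by exists A'.
Qed.

Lemma pmin_min n p : attained n p -> pmin n <= p.
Proof.
move=> np; rewrite /pmin; case: pselect => [h|[]]; last by exists p; apply/asboolP.
by case: ex_minnP => m _; apply; apply/asboolP.
Qed.

Lemma pmin_attained n : 0 < n -> attained n (pmin n).
Proof.
move=> /exists_polyiamond [A [pA sA]]; rewrite /pmin; case: pselect => [h|[]].
  by case: ex_minnP => m /asboolP.
by exists (perimeter A); apply/asboolP; exists A.
Qed.

Lemma pmin_le_transfer m m' d : 0 < m ->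
  (forall A, polyiamond A -> size A = m ->
     exists B, [/\ polyiamond B, size B = m' & perimeter B <= perimeter A + d]) ->
  pmin m' <= pmin m + d.
Proof.
move=> /pmin_attained [A [pA [sA <-]]] /(_ A pA sA) [B [pB sB eB]].
by apply: leq_trans eB; apply: pmin_min; exists B.
Qed.

Lemma pmin_succ_le n : 0 < n -> pmin n.+1 <= pmin n + 1.
Proof.
move=> n0; apply: pmin_le_transfer => // A pA sA.
by have [B [pB sB eB]] := polyiamond_grow pA; exists B; rewrite sB sA.
Qed.

Lemma pmin_le_succ n : 0 < n -> pmin n <= pmin n.+1 + 1.
Proof.
move=> n0; apply: pmin_le_transfer => // A pA sA.
by have [|B [pB sB eB]] := polyiamond_shrink1 pA; [rewrite sA | exists B; rewrite sB sA].
Qed.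

Lemma pmin_le_add2 n : 0 < n -> pmin n <= pmin n.+2.
Proof.
move=> n0; rewrite -[pmin n.+2]addn0; apply: pmin_le_transfer => // A pA sA.
have [|B [pB sB eB]] := polyiamond_shrink2 pA; first by rewrite sA.
by exists B; rewrite sB sA addn0.
Qed.

Lemma odd_pmin n : 0 < n -> odd (pmin n) = odd n.
Proof. by move=> /pmin_attained [A [[uA _ _] [<- <-]]]; apply: odd_perimeter. Qed.

Lemma pmin_add_le n k : 0 < n -> pmin (n + k) <= pmin n + k.
Proof.
move=> n0; elim: k => [|k IH]; first by rewrite !addn0.
by move: (pmin_succ_le (ltn_addr k n0)); rewrite -addnS; lia.
Qed.

Lemma pmin_le_add n k : 0 < n -> pmin n <= pmin (n + k) + odd k.
Proof.
move=> n0; elim/ltn_ind: k => -[|[|k]] IH; first by rewrite !addn0.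
  by rewrite addn1; apply: pmin_le_succ.
have := pmin_le_add2 (ltn_addr k n0); have := IH k (leqnSn _).
by rewrite -!addnS /= negbK; lia.
Qed.

Theorem lemma1 (n : nat) : 1 <= n ->
  (pmin n.+1 = (pmin n).+1 \/ (pmin n.+1).+1 = pmin n) /\
  (forall k : nat, 1 <= k ->
     pmin n <= (pmin (n + k)).+1 /\ pmin (n + k) <= pmin n + k) /\
  (pmin n.+1 = (pmin n).+1 ->
     forall k : nat, 1 <= k -> pmin n <= pmin (n + k)).
Proof.
move=> n0; split; [|split].
- have : pmin n.+1 != pmin n.
    by apply/negP => /eqP/(congr1 odd); rewrite !odd_pmin //=; case: odd.
  by have := pmin_succ_le n0; have := pmin_le_succ n0; lia.
- move=> k _; split; last exact: pmin_add_le.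
  by have := pmin_le_add k n0; have := leq_b1 (odd k); lia.
move=> up k k0; case: (boolP (odd k)) => [ok|/negbTE ek].
  case: k ok {k0} => [//|k]; rewrite oddS => /negbTE ek.
  by have := pmin_le_add k (ltn0Sn n); rewrite addSnnS up ek; lia.
by have := pmin_le_add k n0; rewrite ek; lia.
Qed.
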